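(* Assume $M$ is projective in $\sigma[M]$ and let $X\in\sigma[M]$ with $X=\bigoplus_{\lambda\in\Lambda}X_\lambda$ an internal direct sum of submodules $X_\lambda$. Then $\mathrm{rad}_M(X)=\bigoplus_{\lambda\in\Lambda}\mathrm{rad}_M(X_\lambda)$.
   Context: $R$ is a ring with identity, modules are unital left $R$-modules, $M$ is a fixed left $R$-module; $\sigma[M]$ is the full subcategory of $R$-modules isomorphic to submodules of $M$-generated modules. For $N\le M$ and a module $X$, $N\cdot X$ is the intersection of the kernels of all homomorphisms $X\to W$ where $W$ ranges over modules with $f(N)=0$ for all $f\in\mathrm{Hom}_R(M,W)$ (for $Z\le X$, $N\cdot Z$ is formed regarding $Z$ as a module). A proper submodule $P$ of a module $X$ is $M$-prime if for all $N\le M$, $Z\le X$, $N\cdot Z\subseteq P$ implies $N\cdot X\subseteq P$ or $Z\subseteq P$. $\mathrm{rad}_M(X)$ is the intersection of all $M$-prime submodules of $X$ if $X$ has at least one, and $\mathrm{rad}_M(X)=X$ otherwise. *)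

(* Left modules over a (possibly noncommutative) ring R with
   identity are mathcomp's [lmodType R] (unital: scale1r).  Submodules are
   predicates [V -> Prop]; homomorphisms are mathcomp linear maps. *)
From HB Require Import structures.
From mathcomp Require Import all_boot all_order all_algebra.
From Stdlib Require List.
Set Implicit Arguments. Unset Strict Implicit. Unset Printing Implicit Defensive.
Import GRing.Theory.
Local Open Scope ring_scope.

Section Defs.
Variable R : pzRingType.

Definition submod (V : lmodType R) (S : V -> Prop) : Prop :=
  S 0 /\ (forall x y, S x -> S y -> S (x + y)) /\
  (forall (a : R) x, S x -> S (a *: x)).

Definition subset_of (V : Type) (A B : V -> Prop) : Prop := forall x, A x -> B x.

(* f : V -> W restricts to an R-homomorphism Z -> W on the submodule Z of V.
   (Homomorphisms from Z regarded as a module correspond exactly to such f,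
   up to values outside Z.) *)
Definition hom_on (V W : lmodType R) (Z : V -> Prop) (f : V -> W) : Prop :=
  (forall x y, Z x -> Z y -> f (x + y) = f x + f y) /\
  (forall (a : R) x, Z x -> f (a *: x) = a *: f x).

Definition kills (M W : lmodType R) (N : M -> Prop) : Prop :=
  forall (f : {linear M -> W}) n, N n -> f n = 0.

(* N . Z  (Z a submodule of V, regarded as a module): intersection of kernels
   of all homomorphisms Z -> W, W ranging over modules with f(N)=0 for all
   f in Hom(M,W). *)
Definition dotM (M : lmodType R) (N : M -> Prop) (V : lmodType R)
  (Z : V -> Prop) : V -> Prop :=
  fun z => Z z /\ forall (W : lmodType R), kills W N ->
    forall f : V -> W, hom_on Z f -> f z = 0.

Definition Mprime_in (M V : lmodType R) (Z P : V -> Prop) : Prop :=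
  submod P /\ subset_of P Z /\ (exists x, Z x /\ ~ P x) /\
  forall (N : M -> Prop) (Z' : V -> Prop), submod N -> submod Z' ->
    subset_of Z' Z ->
    subset_of (dotM N Z') P -> subset_of (dotM N Z) P \/ subset_of Z' P.

(* rad_M of the module Z (a submodule of V regarded as a module):
   intersection of all M-prime submodules of Z, or Z if there are none. *)
Definition radM_in (M V : lmodType R) (Z : V -> Prop) : V -> Prop :=
  fun x => Z x /\ forall P, Mprime_in M Z P -> P x.

Definition fullset (V : Type) : V -> Prop := fun _ => True.

Definition radM (M X : lmodType R) : X -> Prop := radM_in M (@fullset X).

Definition M_generated (M Y : lmodType R) : Prop :=
  forall y : Y, exists s : seq ({linear M -> Y} * M)%type,
    y = \sum_(p <- s) p.1 p.2.

Definition in_sigma (M X : lmodType R) : Prop :=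
  exists (Y : lmodType R) (g : {linear X -> Y}), M_generated M Y /\ injective g.

Definition projective_in_sigma (M : lmodType R) : Prop :=
  forall (A B : lmodType R), in_sigma M A -> in_sigma M B ->
  forall (g : {linear A -> B}), (forall b, exists a, g a = b) ->
  forall (f : {linear M -> B}), exists h : {linear M -> A},
    forall m, g (h m) = f m.

Definition internal_direct_sum (X : lmodType R) (L : Type)
  (Xs : L -> X -> Prop) : Prop :=
  (forall l, submod (Xs l)) /\
  (forall x : X, exists s : seq (L * X)%type,
     (forall p, List.In p s -> Xs p.1 p.2) /\ x = \sum_(p <- s) p.2) /\
  (forall (l : L) (s : seq (L * X)%type),
     (forall p, List.In p s -> p.1 <> l /\ Xs p.1 p.2) ->
     Xs l (\sum_(p <- s) p.2) -> \sum_(p <- s) p.2 = 0).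

End Defs.

(* Let M be projective in sigma[M] and X = (+)_l X_l in sigma[M].
   - "rad_M(X_l) is contained in rad_M(X)": if P is M-prime in X and X_l is not
     contained in P, then P /\ X_l is M-prime in X_l (Mprime_restrict); so
     rad_M(X_l) lies in every M-prime submodule of X (radM_in_sub).
   - "rad_M(X) is contained in the sum of the rad_M(X_l)": the projection
     pr_l : X -> X_l pulls M-prime submodules of X_l back to M-prime submodules
     of X (Mprime_preimage), hence maps rad_M(X) into rad_M(X_l) (radM_image),
     and every x is the sum of its projections (sum_of_projections).
   The pull-back step rests on the key identity N . f(Z) = f(N . Z) for
   homomorphisms f between modules of sigma[M] (img_dotM, dotM_img_sub); the
   projectivity of M is used there, through a quotient module in sigma[M]. *)
From HB Require Import structures.
From mathcomp Require Import all_boot all_order all_algebra.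
From Stdlib Require List.
From Stdlib Require Import ClassicalEpsilon FunctionalExtensionality PropExtensionality Setoid.
Set Implicit Arguments. Unset Strict Implicit. Unset Printing Implicit Defensive.
Import GRing.Theory.
Local Open Scope ring_scope.

Definition mklin (R : pzRingType) (U V : lmodType R) (f : U -> V) (H : linear f) :
  {linear U -> V} := HB.pack f (GRing.isLinear.Build R U V *:%R f H).

Section Submodules.
Variables (R : pzRingType) (V : lmodType R) (S : V -> Prop).
Hypothesis HS : submod S.

Lemma submod0 : S 0. Proof. by case: HS. Qed.
Lemma submodD x y : S x -> S y -> S (x + y). Proof. by case: HS => _ [+ _]; apply. Qed.
Lemma submodZ a x : S x -> S (a *: x). Proof. by case: HS => _ [_]; apply. Qed.
Lemma submodN x : S x -> S (- x). Proof. by move=> Sx; rewrite -scaleN1r; apply: submodZ. Qed.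
Lemma submodB x y : S x -> S y -> S (x - y).
Proof. by move=> Sx Sy; apply/submodD/submodN. Qed.

Lemma submod_sum (I : Type) (s : seq I) (P : pred I) (F : I -> V) :
  (forall i, List.In i s -> P i -> S (F i)) -> S (\sum_(i <- s | P i) F i).
Proof.
elim: s => [|i s IH] hs; first by rewrite big_nil; apply: submod0.
rewrite big_cons; have Ss : S (\sum_(j <- s | P j) F j) by apply: IH => j js; apply: hs; right.
by case: ifP => // Pi; apply: submodD Ss; apply: hs => //; left.
Qed.
End Submodules.

Lemma submodI (R : pzRingType) (V : lmodType R) (S T : V -> Prop) :
  submod S -> submod T -> submod (fun v => S v /\ T v).
Proof.
move=> HS HT; split; [|split].
- by split; apply: submod0.
- by move=> x y [Sx Tx] [Sy Ty]; split; apply: submodD.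
- by move=> r x [Sx Tx]; split; apply: submodZ.
Qed.

Section ImagePreimage.
Variables (R : pzRingType) (U V : lmodType R) (f : {linear U -> V}).

Definition img (Z : U -> Prop) : V -> Prop := fun v => exists2 z, Z z & v = f z.

Lemma img_submod Z : submod Z -> submod (img Z).
Proof.
move=> HZ; split; [|split].
- by exists 0; rewrite ?raddf0 //; apply: submod0.
- move=> _ _ [a Za ->] [b Zb ->].
  by exists (a + b); rewrite ?raddfD //; apply: submodD.
- by move=> r _ [a Za ->]; exists (r *: a); rewrite ?linearZ //; apply: submodZ.
Qed.

Lemma preim_submod T : submod T -> submod (fun u => T (f u)).
Proof.
move=> HT; split; [|split].
- by rewrite raddf0; apply: submod0.
- by move=> a b Ta Tb; rewrite raddfD; apply: submodD.
- by move=> r a Ta; rewrite linearZ; apply: submodZ.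
Qed.
End ImagePreimage.

(* The quotient module V/S.  Classes of the congruence modulo S are
   represented by a representative chosen with Hilbert's epsilon. *)
Section Quotient.
Variables (R : pzRingType) (V : lmodType R) (S : V -> Prop).
Hypothesis HS : submod S.

Definition eqmod (x y : V) := S (x - y).

Lemma eqmod_refl x : eqmod x x. Proof. by rewrite /eqmod subrr; apply: (submod0 HS). Qed.
Lemma eqmod_sym x y : eqmod x y -> eqmod y x.
Proof. by rewrite /eqmod => Sxy; rewrite -opprB; apply: (submodN HS). Qed.
Lemma eqmod_trans x y z : eqmod x y -> eqmod y z -> eqmod x z.
Proof. by rewrite /eqmod => Sxy Syz; have := submodD HS Sxy Syz; rewrite addrA subrK. Qed.

Add Parametric Relation : V eqmod
  reflexivity proved by eqmod_refl symmetry proved by eqmod_sym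
  transitivity proved by eqmod_trans as eqmod_rel.

Add Parametric Morphism : (@GRing.add V) with signature eqmod ==> eqmod ==> eqmod
  as eqmod_add.
Proof.
move=> x y Sxy u v Suv; rewrite /eqmod opprD addrACA.
exact: (submodD HS).
Qed.

Add Parametric Morphism a : (@GRing.scale R V a) with signature eqmod ==> eqmod
  as eqmod_scale.
Proof. by move=> x y Sxy; rewrite /eqmod -scalerBr; apply: (submodZ HS). Qed.

Definition canon (x : V) : V := epsilon (inhabits 0) (eqmod x).

Lemma canon_eqmod x : eqmod (canon x) x.
Proof.
apply: eqmod_sym; apply: (epsilon_spec (inhabits 0) (eqmod x)).
by exists x; apply: eqmod_refl.
Qed.

Lemma canon_eq x y : eqmod x y -> canon x = canon y.
Proof.
move=> Exy; rewrite /canon; congr epsilon.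
apply: functional_extensionality => z; apply: propositional_extensionality.
by split; apply: eqmod_trans; [apply: eqmod_sym|].
Qed.

(* V/S as the subtype of canonical representatives; the dummy [let] makes the
   type depend on HS, on which its module structure depends *)
Definition quot : Type := let _ := HS in {x : V | canon x == x}.
HB.instance Definition _ := Choice.on quot.

Definition qpi (x : V) : quot :=
  exist _ (canon x) (introT eqP (canon_eq (canon_eqmod x))).

Lemma qpi_eq x y : eqmod x y -> qpi x = qpi y.
Proof. by move=> Exy; apply: val_inj; rewrite /= (canon_eq Exy). Qed.

Lemma qpi_eqE x y : qpi x = qpi y -> eqmod x y.
Proof.
move=> /(congr1 val) /= Exy.
by apply: eqmod_trans (eqmod_sym (canon_eqmod x)) _; rewrite Exy; apply: canon_eqmod.
Qed.

Lemma qpi_val (a : quot) : qpi (val a) = a.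
Proof. by apply: val_inj => /=; apply/eqP; case: a. Qed.

Lemma val_qpi x : eqmod (val (qpi x)) x. Proof. exact: canon_eqmod. Qed.

Definition qadd (a b : quot) := qpi (val a + val b).
Definition qopp (a : quot) := qpi (- val a).
Definition qscale r (a : quot) := qpi (r *: val a).

Lemma qaddA : associative qadd.
Proof. move=> a b c; apply: qpi_eq; rewrite !val_qpi addrA; reflexivity. Qed.
Lemma qaddC : commutative qadd.
Proof. by move=> a b; rewrite /qadd addrC. Qed.
Lemma qadd0 : left_id (qpi 0) qadd.
Proof. move=> a; rewrite -[RHS]qpi_val; apply: qpi_eq; rewrite val_qpi add0r; reflexivity. Qed.
Lemma qaddN : left_inverse (qpi 0) qopp qadd.
Proof. move=> a; apply: qpi_eq; rewrite val_qpi addNr; reflexivity. Qed.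
HB.instance Definition _ := GRing.isZmodule.Build quot qaddA qaddC qadd0 qaddN.

Lemma qscaleA a b v : qscale a (qscale b v) = qscale (a * b) v.
Proof. apply: qpi_eq; rewrite val_qpi scalerA; reflexivity. Qed.
Lemma qscale1 : left_id 1 qscale.
Proof. move=> a; rewrite -[RHS]qpi_val; apply: qpi_eq; rewrite scale1r; reflexivity. Qed.
Lemma qscaleDr : right_distributive qscale +%R.
Proof. move=> a u v; apply: qpi_eq; rewrite !val_qpi scalerDr; reflexivity. Qed.
Lemma qscaleDl v : {morph qscale^~ v: a b / a + b}.
Proof. move=> a b; apply: qpi_eq; rewrite !val_qpi scalerDl; reflexivity. Qed.
HB.instance Definition _ :=
  GRing.Zmodule_isLmodule.Build R quot qscaleA qscale1 qscaleDr qscaleDl.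

Lemma qpi_linear : linear qpi.
Proof. move=> a u v; apply: qpi_eq; rewrite !val_qpi; reflexivity. Qed.
Definition qpi_lin : {linear V -> quot} := mklin qpi_linear.

Lemma qpi0 x : qpi x = 0 <-> S x.
Proof.
split=> [/qpi_eqE|Sx]; first by rewrite /eqmod subr0.
by apply: qpi_eq; rewrite /eqmod subr0.
Qed.
End Quotient.

Section SubmoduleType.
Variables (R : pzRingType) (V : lmodType R) (Z : V -> Prop).
Hypothesis HZ : submod Z.

(* membership in Z, decided classically so that Z gives a boolean subtype *)
Definition inZ (x : V) : bool := if excluded_middle_informative (Z x) then true else false.
Lemma inZP x : inZ x <-> Z x.
Proof. by rewrite /inZ; case: excluded_middle_informative. Qed.

Definition subm : Type := let _ := HZ in {x : V | inZ x}.
HB.instance Definition _ := Choice.on subm.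

Definition smk x (Zx : Z x) : subm := exist _ x (proj2 (inZP x) Zx).
Lemma sval_in (a : subm) : Z (val a). Proof. by apply/inZP; case: a. Qed.

Definition sadd (a b : subm) : subm := smk (submodD HZ (sval_in a) (sval_in b)).
Definition sopp (a : subm) : subm := smk (submodN HZ (sval_in a)).
Definition sscale r (a : subm) : subm := smk (submodZ HZ r (sval_in a)).

Lemma saddA : associative sadd. Proof. by move=> a b c; apply: val_inj; rewrite /= addrA. Qed.
Lemma saddC : commutative sadd. Proof. by move=> a b; apply: val_inj; rewrite /= addrC. Qed.
Lemma sadd0 : left_id (smk (submod0 HZ)) sadd.
Proof. by move=> a; apply: val_inj; rewrite /= add0r. Qed.
Lemma saddN : left_inverse (smk (submod0 HZ)) sopp sadd.
Proof. by move=> a; apply: val_inj; rewrite /= addNr. Qed.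
HB.instance Definition _ := GRing.isZmodule.Build subm saddA saddC sadd0 saddN.

Lemma sscaleA a b v : sscale a (sscale b v) = sscale (a * b) v.
Proof. by apply: val_inj; rewrite /= scalerA. Qed.
Lemma sscale1 : left_id 1 sscale. Proof. by move=> a; apply: val_inj; rewrite /= scale1r. Qed.
Lemma sscaleDr : right_distributive sscale +%R.
Proof. by move=> a u v; apply: val_inj; rewrite /= scalerDr. Qed.
Lemma sscaleDl v : {morph sscale^~ v: a b / a + b}.
Proof. by move=> a b; apply: val_inj; rewrite /= scalerDl. Qed.
HB.instance Definition _ :=
  GRing.Zmodule_isLmodule.Build R subm sscaleA sscale1 sscaleDr sscaleDl.

Lemma sval_linear : linear (fun a : subm => val a). Proof. by []. Qed.
Definition sval_lin : {linear subm -> V} := mklin sval_linear.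
End SubmoduleType.

Section InducedMap.
Variables (R : pzRingType) (U V : lmodType R) (f : {linear U -> V}).
Variables (S : U -> Prop) (T : V -> Prop) (HS : submod S) (HT : submod T).
Hypothesis fST : forall u, T (f u) <-> S u.

Definition qmap (w : quot HS) : quot HT := qpi HT (f (val w)).

Lemma qmapE u : qmap (qpi HS u) = qpi HT (f u).
Proof.
apply: qpi_eq; rewrite /eqmod -raddfB; apply/fST.
exact: val_qpi.
Qed.

Lemma qmap_linear : linear qmap.
Proof.
move=> r w1 w2; rewrite -(qpi_val w1) -(qpi_val w2).
have -> : r *: qpi HS (val w1) + qpi HS (val w2) = qpi HS (r *: val w1 + val w2).
  by rewrite -[RHS]/(qpi_lin HS _) linearP.
by rewrite !qmapE linearP; apply: (linearP (qpi_lin HT)).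
Qed.

Lemma qmap_inj : injective qmap.
Proof.
move=> w1 w2 /qpi_eqE; rewrite /eqmod -raddfB => /fST Sw.
by rewrite -(qpi_val w1) -(qpi_val w2); apply: qpi_eq.
Qed.
End InducedMap.

Section SigmaClosure.
Variables (R : pzRingType) (M : lmodType R).

Lemma sigma_inj (U V : lmodType R) (g : {linear U -> V}) :
  injective g -> in_sigma M V -> in_sigma M U.
Proof.
move=> g_inj [Y [e [HY e_inj]]]; exists Y, (e \o g); split => //.
exact: inj_comp.
Qed.

Lemma submod_sigma (V : lmodType R) (Z : V -> Prop) (HZ : submod Z) :
  in_sigma M V -> in_sigma M (subm HZ).
Proof. by apply: sigma_inj (sval_lin HZ) _ => a b /val_inj. Qed.

Lemma quot_Mgen (Y : lmodType R) (T : Y -> Prop) (HT : submod T) :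
  M_generated M Y -> M_generated M (quot HT).
Proof.
move=> HY w; rewrite -(qpi_val w); have [s ->] := HY (val w).
exists [seq ((qpi_lin HT \o p.1 : {linear M -> quot HT}), p.2)
         | p : {linear M -> Y} * M <- s].
by rewrite big_map -[qpi HT _]/(qpi_lin HT _) raddf_sum.
Qed.

(* V/K is in sigma[M]: it embeds into Y/e(K) for an embedding e of V into an
   M-generated Y *)
Lemma quot_sigma (V : lmodType R) (K : V -> Prop) (HK : submod K) :
  in_sigma M V -> in_sigma M (quot HK).
Proof.
move=> [Y [e [HY e_inj]]].
have eK : forall v, img e K (e v) <-> K v.
  by move=> v; split=> [[k Kk /e_inj ->] //|Kv]; exists v.
exists (quot (img_submod e HK)), (mklin (qmap_linear (HS:=HK) (img_submod e HK) eK)).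
split; first exact: quot_Mgen.
exact: qmap_inj.
Qed.
End SigmaClosure.

Section DotProduct.
Variables (R : pzRingType) (M : lmodType R) (N : M -> Prop).

Lemma hom_on0 (V W : lmodType R) (Z : V -> Prop) (f : V -> W) :
  submod Z -> hom_on Z f -> f 0 = 0.
Proof.
move=> HZ [fD _]; have Z0 := submod0 HZ.
by apply: (@addrI _ (f 0)); rewrite addr0 -fD ?addr0.
Qed.

Lemma dotM_submod (V : lmodType R) (Z : V -> Prop) :
  submod Z -> submod (dotM N Z).
Proof.
move=> HZ; split; [|split].
- by split=> [|W _ f fh]; [apply: submod0 | apply: hom_on0 fh].
- move=> x y [Zx x0] [Zy y0]; split=> [|W kW f fh]; first exact: submodD.
  by case: (fh) => fD _; rewrite fD // x0 // y0 // addr0.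
- move=> r x [Zx x0]; split=> [|W kW f fh]; first exact: submodZ.
  by case: (fh) => _ fZ; rewrite fZ // x0 // scaler0.
Qed.

(* N . Z is monotone in Z, since homomorphisms on Z' restrict to Z *)
Lemma dotM_mono (V : lmodType R) (Z Z' : V -> Prop) :
  subset_of Z Z' -> subset_of (dotM N Z) (dotM N Z').
Proof.
move=> ZZ' z [Zz z0]; split=> [|W kW f [fD fZ]]; first exact: ZZ'.
by apply: (z0 W kW f); split=> [x y Zx Zy|a x Zx]; [apply: fD | apply: fZ]; apply: ZZ'.
Qed.

Lemma img_dotM (U V : lmodType R) (f : {linear U -> V}) (Z : U -> Prop) :
  subset_of (img f (dotM N Z)) (dotM N (img f Z)).
Proof.
move=> _ [z [Zz z0] ->]; split=> [|W kW g [gD gZ]]; first by exists z.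
apply: (z0 W kW (g \o f)); split=> [x y Zx Zy|a x Zx] /=.
- by rewrite raddfD gD //; [exists x | exists y].
- by rewrite linearZ gZ //; exists x.
Qed.

Lemma hom_dotM (V : lmodType R) (Z : V -> Prop) (HZ : submod Z)
    (h : {linear M -> subm HZ}) n :
  N n -> dotM N Z (val (h n)).
Proof.
move=> Nn; split=> [|W kW g [gD gZ]]; first exact: sval_in.
have gh_lin : linear (fun m => g (val (h m))).
  move=> r m1 m2; rewrite linearP /= gD ?gZ //; try exact: sval_in.
  by apply: (submodZ HZ); apply: sval_in.
exact: kW (mklin gh_lin) n Nn.
Qed.
End DotProduct.

(* The module
   W := Z / {z in Z | f z in f(N . Z)}, a copy of f(Z)/f(N . Z), lies in
   sigma[M], and every morphism M -> W kills N: it lifts along Z -> W by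
   projectivity, and the lift maps N into N . Z.  Hence the quotient map
   f(Z) -> W kills N . f(Z). *)
Section DotImage.
Variables (R : pzRingType) (M X X' : lmodType R).
Hypotheses (Hproj : projective_in_sigma M) (HX : in_sigma M X) (HX' : in_sigma M X').
Variables (f : {linear X -> X'}) (N : M -> Prop) (Z : X -> Prop).
Hypothesis HZ : submod Z.

Let fZ : {linear subm HZ -> X'} := f \o sval_lin HZ.
Let K := img f (dotM N Z).
Let HK : submod K := img_submod f (dotM_submod N HZ).
Let S a := K (fZ a).
Let HS : submod S := preim_submod fZ HK.
Let W := quot HS.

(* W embeds into X'/f(N . Z) *)
Lemma W_sigma : in_sigma M W.
Proof.
apply: (sigma_inj (g := mklin (qmap_linear (HS:=HS) HK (fun a => iff_refl _)))).
  exact: qmap_inj.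
exact: quot_sigma HX'.
Qed.

Lemma W_kills : kills W N.
Proof.
move=> h n Nn.
have qpi_onto (w : W) : exists a, qpi_lin HS a = w by exists (val w); apply: qpi_val.
have [h' hh'] := Hproj (submod_sigma HZ HX) W_sigma qpi_onto h.
rewrite -hh'; apply/(qpi0 HS).
by exists (val (h' n)); first exact: hom_dotM.
Qed.

Definition preimZ (u : X') : subm HZ := epsilon (inhabits 0) (fun a => fZ a = u).

Lemma preimZP u : img f Z u -> fZ (preimZ u) = u.
Proof.
move=> [z Zz ->]; apply: (epsilon_spec (inhabits 0) (fun a => fZ a = f z)).
by exists (smk HZ Zz).
Qed.

Definition toW (u : X') : W := qpi HS (preimZ u).

Lemma toW_hom : hom_on (img f Z) toW.
Proof.
have HfZ := img_submod f HZ.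
split=> [u v Iu Iv|r u Iu]; rewrite /toW.
- rewrite -[qpi HS _ + _]/(qpi_lin HS _ + qpi_lin HS _) -raddfD; apply: qpi_eq.
  rewrite /eqmod /S linearB linearD !preimZP ?subrr //; last exact: submodD.
  exact: (submod0 HK).
- rewrite -[_ *: qpi HS _]/(_ *: qpi_lin HS _) -linearZ; apply: qpi_eq.
  rewrite /eqmod /S linearB linearZ !preimZP ?subrr //; last exact: submodZ.
  exact: (submod0 HK).
Qed.

Lemma dotM_img_sub : subset_of (dotM N (img f Z)) (img f (dotM N Z)).
Proof.
move=> u [Iu u0]; rewrite -(preimZP Iu).
exact: (proj1 (qpi0 HS (preimZ u)) (u0 W W_kills toW toW_hom)).
Qed.
End DotImage.

Section MPrime.
Variables (R : pzRingType) (M : lmodType R).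

Lemma Mprime_restrict (V : lmodType R) (Z Z' P : V -> Prop) :
  submod Z -> subset_of Z Z' -> Mprime_in M Z' P -> (exists x, Z x /\ ~ P x) ->
  Mprime_in M Z (fun v => P v /\ Z v).
Proof.
move=> HZ ZZ' [HP [_ [_ Pprime]]] [z [Zz nPz]]; split; [|split; [|split]].
- exact: submodI.
- by move=> v [].
- by exists z; split=> // [[]].
- move=> N Z'' HN HZ'' Z''Z dotP.
  have Z''Z' : subset_of Z'' Z' by move=> v /Z''Z /ZZ'.
  case: (Pprime N Z'' HN HZ'' Z''Z' (fun v dv => proj1 (dotP v dv))).
  + by move=> dotZ'P; left=> v dv; split; [apply/dotZ'P/(dotM_mono ZZ') | case: dv].
  + by move=> Z''P; right=> v Z''v; split; [apply: Z''P | apply: Z''Z].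
Qed.

Lemma radM_in_sub (V : lmodType R) (Z Z' P : V -> Prop) v :
  submod Z -> subset_of Z Z' -> Mprime_in M Z' P -> radM_in M Z v -> P v.
Proof.
move=> HZ ZZ' HP [Zv radv].
case: (classic (exists x, Z x /\ ~ P x)) => [notZP|ZP].
  exact: (radv _ (Mprime_restrict HZ ZZ' HP notZP)).1.
by apply: NNPP => nPv; apply: ZP; exists v.
Qed.
End MPrime.

Section PrimePreimage.
Variables (R : pzRingType) (M X X' : lmodType R).
Hypotheses (Hproj : projective_in_sigma M) (HX : in_sigma M X) (HX' : in_sigma M X').
Variables (f : {linear X -> X'}) (Z' : X' -> Prop).
Hypothesis f_in : forall x, Z' (f x).
Hypothesis f_onto : forall z, Z' z -> exists x, f x = z.

Lemma Mprime_preimage Q :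
  Mprime_in M Z' Q -> Mprime_in M (@fullset X) (fun x => Q (f x)).
Proof.
move=> [HQ [_ [[v [Z'v nQv]] Qprime]]]; split; [|split; [|split]].
- exact: preim_submod.
- by [].
- by have [x fx] := f_onto Z'v; exists x; rewrite fx.
- move=> N Z HN HZ _ dotQ.
  have fZZ' : subset_of (img f Z) Z' by move=> _ [z _ ->].
  have dot_fZ : subset_of (dotM N (img f Z)) Q.
    by move=> u /(dotM_img_sub Hproj HX HX' HZ) [z dz ->]; apply: dotQ.
  case: (Qprime N _ HN (img_submod f HZ) fZZ' dot_fZ) => [dotZ'Q|fZQ].
  + left=> x dx; apply: dotZ'Q.
    have fXZ' : subset_of (img f (@fullset X)) Z' by move=> _ [y _ ->].
    by apply: (dotM_mono fXZ'); apply: img_dotM; exists x.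
  + by right=> z Zz; apply: fZQ; exists z.
Qed.

Lemma radM_image x : radM M x -> radM_in M Z' (f x).
Proof.
move=> [_ radx]; split=> [|Q HQ]; first exact: f_in.
exact: radx _ (Mprime_preimage HQ).
Qed.
End PrimePreimage.

(* Elements are represented by finite
   families s of pairs (l, v) with v in X_l; the l-component of s is the sum of
   its entries of index l.  Independence makes this component depend only on
   the sum of s, which defines the projection pr l : X -> X_l. *)
Section DirectSum.
Variables (R : pzRingType) (X : lmodType R) (L : Type) (Xs : L -> X -> Prop).
Hypothesis Hds : internal_direct_sum Xs.

Let Xs_submod : forall l, submod (Xs l) := proj1 Hds.

Definition eqidx (l l' : L) : bool :=
  if excluded_middle_informative (l = l') then true else false.
Lemma eqidxP l l' : reflect (l = l') (eqidx l l').
Proof. by rewrite /eqidx; case: excluded_middle_informative => e; constructor. Qed.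

Definition family (s : seq (L * X)) := forall p, List.In p s -> Xs p.1 p.2.
Definition component l (s : seq (L * X)) := \sum_(p <- s | eqidx p.1 l) p.2.

Lemma component_in l s : family s -> Xs l (component l s).
Proof.
by move=> fs; apply: submod_sum => // p /fs + /eqidxP <-.
Qed.

(* the components of a family depend only on its sum: the difference of the
   contributions outside l is a sum of elements of other summands lying in X_l,
   hence zero by independence *)
Lemma component_unique l s s' : family s -> family s' ->
  \sum_(p <- s) p.2 = \sum_(p <- s') p.2 -> component l s = component l s'.
Proof.
move=> fs fs' sum_eq.
pose rest (t : seq (L * X)) := \sum_(p <- t | ~~ eqidx p.1 l) p.2.
have split_sum (t : seq (L * X)) : \sum_(p <- t) p.2 = component l t + rest t.
  by rewrite (bigID (fun p => eqidx p.1 l)).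
pose t := [seq p <- s | ~~ eqidx p.1 l] ++
          [seq (p.1, - p.2) | p <- [seq p <- s' | ~~ eqidx p.1 l]].
have t_sum : \sum_(p <- t) p.2 = component l s' - component l s.
  rewrite big_cat big_map /= !big_filter sumrN -/(rest s) -/(rest s').
  by apply/eqP; rewrite subr_eq addrAC -split_sum -sum_eq split_sum addrC addKr.
have t_other p : List.In p t -> p.1 <> l /\ Xs p.1 p.2.
  move=> /(List.in_app_or _ _ p) [/List.filter_In [sp /eqidxP pl]|].
    by split=> //; apply: fs.
  move=> /List.in_map_iff [q [<- /List.filter_In [s'q /eqidxP ql]]].
  by split=> //=; apply: (submodN (Xs_submod _)); apply: fs'.
apply/eqP; rewrite eq_sym -subr_eq0 -t_sum; apply/eqP.
apply: (proj2 (proj2 Hds) l) => //; rewrite t_sum.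
by apply: (submodB (Xs_submod l)); apply: component_in.
Qed.

Definition decomp (x : X) : seq (L * X) :=
  epsilon (inhabits [::]) (fun s => family s /\ x = \sum_(p <- s) p.2).
Lemma decompP x : family (decomp x) /\ x = \sum_(p <- decomp x) p.2.
Proof.
apply: (epsilon_spec (inhabits [::]) (fun s => family s /\ x = \sum_(p <- s) p.2)).
have [s [fs ->]] := proj1 (proj2 Hds) x; by exists s.
Qed.

Definition pr l x := component l (decomp x).

Lemma prE l x s : family s -> x = \sum_(p <- s) p.2 -> pr l x = component l s.
Proof.
move=> fs x_sum; have [fd d_sum] := decompP x.
by apply: component_unique; rewrite // -d_sum.
Qed.

Lemma pr_linear l : linear (pr l).
Proof.
move=> a x y; have [fx x_sum] := decompP x; have [fy y_sum] := decompP y.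
pose s := [seq (p.1, a *: p.2) | p <- decomp x] ++ decomp y.
have fs : family s.
  move=> p /(List.in_app_or _ _ p) [|/fy //].
  move=> /List.in_map_iff [q [<- /fx Xq]] /=.
  exact: (submodZ (Xs_submod _)).
rewrite (prE l fs); last by rewrite big_cat big_map /= -scaler_sumr -x_sum -y_sum.
by rewrite /component big_cat big_map /= -scaler_sumr.
Qed.
Definition pr_lin l : {linear X -> X} := mklin (pr_linear l).

Lemma pr_in l x : Xs l (pr l x).
Proof. exact: component_in (proj1 (decompP x)). Qed.

Lemma pr_id l v : Xs l v -> pr l v = v.
Proof.
move=> Xv; have fs : family [:: (l, v)] by move=> p [<-|].
rewrite (prE l fs); last by rewrite big_seq1.
by rewrite /component big_cons big_nil addr0; case: eqidxP.
Qed.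

Fixpoint distinct (t : seq (L * X)) : Prop :=
  if t is p :: t' then (forall q, List.In q t' -> p.1 <> q.1) /\ distinct t' else True.

Lemma distinct_filter (P : pred (L * X)) t : distinct t -> distinct [seq q <- t | P q].
Proof.
elim: t => //= p t IH [pt dt]; case: ifP => _ /=; last exact: IH.
by split=> [q /List.filter_In [/pt]|]; last exact: IH.
Qed.

(* merging entries of equal index turns any family into a distinct one *)
Lemma distinct_family s : family s ->
  exists t, [/\ family t, distinct t & \sum_(p <- s) p.2 = \sum_(p <- t) p.2].
Proof.
elim: s => [|p s IH] fps.
  by exists [::]; split=> // q [].
have [|t [ft dt s_sum]] := IH; first by move=> q qs; apply: fps; right.
pose other := [seq q <- t | ~~ eqidx q.1 p.1].
exists ((p.1, p.2 + component p.1 t) :: other); split=> /=.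
- move=> q [<-|/List.filter_In [/ft //]] /=.
  by apply: (submodD (Xs_submod _)); [apply: fps; left | apply: component_in].
- split=> [q /List.filter_In [_ /eqidxP qp] /esym //|].
  exact: distinct_filter.
- by rewrite !big_cons big_filter s_sum (bigID (fun q => eqidx q.1 p.1)) addrA.
Qed.

Lemma component_none l t : (forall q, List.In q t -> l <> q.1) -> component l t = 0.
Proof.
elim: t => [|q t IH] lt; first by rewrite /component big_nil.
rewrite /component big_cons -/(component l t) IH => [|r rt]; last by apply: lt; right.
by case: eqidxP => // ql; case: (lt q (or_introl erefl)).
Qed.

Lemma component_distinct t p : distinct t -> List.In p t -> component p.1 t = p.2.
Proof.
elim: t => //= q t IH [qt dt] [<-|pt]; rewrite /component big_cons -/(component _ t).
  by rewrite component_none // addr0; case: eqidxP.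
by case: eqidxP => [qp|_]; [case: (qt p pt qp) | exact: IH].
Qed.

Lemma sum_of_projections x :
  exists t, x = \sum_(p <- t) p.2 /\ forall p, List.In p t -> pr p.1 x = p.2.
Proof.
have [s [fs x_sum]] := proj1 (proj2 Hds) x.
have [t [ft dt st_sum]] := distinct_family fs.
exists t; split=> [|p pt]; first by rewrite x_sum st_sum.
by rewrite (prE p.1 ft) ?component_distinct // x_sum st_sum.
Qed.
End DirectSum.

Theorem proposition2p30 (R : pzRingType) (M X : lmodType R) (L : Type)
  (Xs : L -> X -> Prop) :
  projective_in_sigma M -> in_sigma M X -> internal_direct_sum Xs ->
  forall x : X,
    radM M x <->
    (exists s : seq (L * X)%type,
       (forall p, List.In p s -> radM_in M (Xs p.1) p.2) /\
       x = \sum_(p <- s) p.2).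
Proof.
move=> Hproj HX Hds x; split.
- (* the projections pr_l map rad_M(X) into rad_M(X_l) *)
  move=> radx; have [t [x_sum prt]] := sum_of_projections Hds x.
  exists t; split=> // p /prt <-.
  apply: (radM_image (f := pr_lin Hds p.1) Hproj HX HX) radx; first exact: pr_in.
  by move=> v Xv; exists v; apply: pr_id.
- (* each rad_M(X_l) lies in every M-prime submodule of X *)
  move=> [s [rads ->]]; split=> // P HP.
  apply: (submod_sum (P := xpredT) (proj1 HP)) => p /rads radp _.
  exact: radM_in_sub (proj1 Hds p.1) _ HP radp.
Qed.
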